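(* Let $G$ be a connected graph of order $n$ with diameter $d\ge 2$, and suppose $G$ is not isomorphic to the path $P_{d+1}$. Then $m_G[n-d+2,n]\le n-d$.
   Context: For a graph $G$ of order $n$, the Laplacian eigenvalues are the eigenvalues of the Laplacian matrix $L(G)=D(G)-A(G)$ (they lie in $[0,n]$), and for an interval $I\subseteq[0,n]$, $m_G I$ denotes the number of Laplacian eigenvalues of $G$ (counted with multiplicity) in $I$. $P_k$ is the path on $k$ vertices. *)

From HB Require Import structures.
From mathcomp Require Import all_boot all_order all_algebra.
From mathcomp Require Import reals.
Set Implicit Arguments. Unset Strict Implicit. Unset Printing Implicit Defensive.
Import Order.TTheory GRing.Theory Num.Theory.
Local Open Scope ring_scope.

(* A simple graph: vertex set T (a finType), adjacency e : rel T,
   assumed symmetric and irreflexive (hypotheses of the theorem). *)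

Definition deg (T : finType) (e : rel T) (x : T) : nat := #|[set y | e x y]|.

Definition laplacian (R : nzRingType) (T : finType) (e : rel T) : 'M[R]_#|T| :=
  \matrix_(i, j)
    ((if i == j then (deg e (enum_val i))%:R else 0)
     - (e (enum_val i) (enum_val j))%:R).

(* s is the list of Laplacian eigenvalues of G counted with multiplicity:
   the characteristic polynomial of L(G) factors as prod_(x <- s) (X - x). *)
Definition laplacian_spectrum (R : realType) (T : finType) (e : rel T)
  (s : seq R) : Prop :=
  char_poly (laplacian R e) = \prod_(x <- s) ('X - x%:P).

Definition mG_closed (R : realType) (s : seq R) (a b : R) : nat :=
  count (fun x => (a <= x) && (x <= b)) s.

Definition within (T : finType) (e : rel T) (x y : T) (k : nat) : Prop :=
  exists p : seq T, [/\ (size p <= k)%N, path e x p & last x p = y].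

Definition diameter (T : finType) (e : rel T) (d : nat) : Prop :=
  (forall x y, within e x y d) /\ exists x y, ~ within e x y d.-1.

Definition connected_graph (T : finType) (e : rel T) : Prop :=
  forall x y, connect e x y.

Definition path_adj (k : nat) : rel 'I_k :=
  fun i j => (i.+1 == j :> nat) || (j.+1 == i :> nat).

Definition iso_to_path (T : finType) (e : rel T) (k : nat) : Prop :=
  exists f : T -> 'I_k, bijective f /\ forall x y, e x y = path_adj (f x) (f y).

From HB Require Import structures.
From mathcomp Require Import all_boot all_order all_algebra.
From mathcomp Require Import reals.
From mathcomp Require Import spectral sesquilinear.
From mathcomp.real_closed Require Import complex.
From mathcomp Require Import ring zify.
Set Implicit Arguments. Unset Strict Implicit. Unset Printing Implicit Defensive.
Import Order.TTheory GRing.Theory Num.Theory.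

(* Let v_0 ... v_d be a diametral path.  It has no chords and, as G is not
   P_{d+1}, misses some vertex w.  Removing from it the vertex v_j following the
   first neighbour of w leaves a set S of d vertices on which every row sum
   deg t + |N(t) /\ S| of the signless Laplacian restricted to S is at most
   c = n - d + 2, strictly at the ends of the path.  For y supported on S,
     2 (c |y|^2 - y* L y)
       = 2 sum_t (c - deg t - |N(t) /\ S|) |y_t|^2 + sum_{t ~ u in S} |y_t + y_u|^2,
   and equality would force y to vanish at the ends and to alternate in sign
   along the two subpaths of S, hence y = 0.  So the Rayleigh quotient of L is
   below c on a d-dimensional subspace, and by min-max at most n - d
   eigenvalues of L are at least c. *)

Section LaplacianForm.
Local Open Scope ring_scope.

Lemma sumr_indicator (R : pzSemiRingType) (I : finType) (P : pred I) :
  \sum_i ((P i)%:R : R) = #|P|%:R.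
Proof. by rewrite -natr_sum -sum1_card [in RHS]big_mkcond. Qed.

Variables (C : numClosedFieldType) (T : finType) (e : rel T).
Implicit Types (r : rel T) (y : T -> C).

Definition lap_form y :=
  \sum_t (deg e t)%:R * (y t * (y t)^*) - \sum_t \sum_u (e t u)%:R * (y t * (y u)^*).

Lemma sum_rel_normD r y : symmetric r ->
  \sum_t \sum_u (r t u)%:R * ((y t + y u) * (y t + y u)^*) =
  (\sum_t #|[set u | r t u]|%:R * (y t * (y t)^*)) *+ 2
  + (\sum_t \sum_u (r t u)%:R * (y t * (y u)^*)) *+ 2.
Proof.
move=> r_sym; have expand t u : (r t u)%:R * ((y t + y u) * (y t + y u)^*) =
    (r t u)%:R * (y t * (y t)^*) + (r u t)%:R * (y u * (y u)^*)
    + (r t u)%:R * (y t * (y u)^*) + (r u t)%:R * (y u * (y t)^*).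
  by rewrite [r u t]r_sym rmorphD /=; ring.
have deg_sum t : \sum_u (r t u)%:R * (y t * (y t)^*) = #|[set u | r t u]|%:R * (y t * (y t)^*).
  by rewrite -mulr_suml sumr_indicator cardsE.
under eq_bigr do rewrite (eq_bigr _ (fun u _ => expand _ u)) !big_split.
rewrite !big_split /= [X in _ + X + _ + _]exchange_big [X in _ + _ + _ + X]exchange_big /=.
by under eq_bigr do rewrite deg_sum; rewrite !mulr2n; ring.
Qed.

Section RowSumBound.
Variables (S : {set T}) (c : nat) (y : T -> C).
Hypotheses (e_sym : symmetric e) (y_supp : forall t, t \notin S -> y t = 0).
Hypothesis row_le : forall t, t \in S -> (deg e t + #|[set u in S | e t u]| <= c)%N.

Lemma lap_form_gap :
  (c%:R * \sum_t y t * (y t)^* - lap_form y) *+ 2 =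
  (\sum_t (c - (deg e t + #|[set u in S | e t u]|))%:R * (y t * (y t)^*)) *+ 2
  + \sum_t \sum_u [&& e t u, t \in S & u \in S]%:R * ((y t + y u) * (y t + y u)^*).
Proof.
set eS := [rel t u | [&& e t u, t \in S & u \in S]].
rewrite (sum_rel_normD (r := eS)); last by move=> t u /=; rewrite e_sym [(t \in S) && _]andbC.
have edgesE : \sum_t \sum_u (e t u)%:R * (y t * (y u)^*) =
              \sum_t \sum_u (eS t u)%:R * (y t * (y u)^*).
  apply: eq_bigr => t _; apply: eq_bigr => u _ /=.
  have [tS|/y_supp->] := boolP (t \in S); last by rewrite !mul0r !mulr0.
  have [uS|/y_supp->] := boolP (u \in S); last by rewrite rmorph0 !mulr0.
  by rewrite !andbT.
have rowE t : (c - (deg e t + #|[set u in S | e t u]|))%:R * (y t * (y t)^*) =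
    c%:R * (y t * (y t)^*) - (deg e t)%:R * (y t * (y t)^*)
    - #|[set u | eS t u]|%:R * (y t * (y t)^*).
  have [tS|/y_supp->] := boolP (t \in S); last by rewrite !mul0r !mulr0 !subr0.
  have -> : [set u | eS t u] = [set u in S | e t u].
    by apply/setP => u; rewrite !inE /= tS andbC.
  by rewrite natrB ?row_le // natrD; ring.
under [in RHS]eq_bigr do rewrite rowE.
by rewrite /lap_form edgesE !sumrB -mulr_sumr !mulr2n; ring.
Qed.

Lemma lap_form_lt :
  ((forall t, t \in S -> (deg e t + #|[set u in S | e t u]| < c)%N -> y t = 0) ->
   (forall t u, t \in S -> u \in S -> e t u -> y t + y u = 0) ->
   forall t, t \in S -> y t = 0) ->
  (exists t, y t != 0) ->
  lap_form y < c%:R * \sum_t y t * (y t)^*.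
Proof.
move=> rigid [t0 yt0]; rewrite -subr_gt0 -(pmulrn_lgt0 _ (isT : (0 < 2)%N)) lap_form_gap.
have row_ge0 t : true -> 0 <= (c - (deg e t + #|[set u in S | e t u]|))%:R * (y t * (y t)^*).
  by rewrite mulr_ge0 ?ler0n ?mul_conjC_ge0.
have edge_ge0 t u : true -> 0 <= [&& e t u, t \in S & u \in S]%:R * ((y t + y u) * (y t + y u)^*).
  by rewrite mulr_ge0 ?ler0n ?mul_conjC_ge0.
have edges_ge0 t : true ->
    0 <= \sum_u [&& e t u, t \in S & u \in S]%:R * ((y t + y u) * (y t + y u)^*).
  by move=> _; apply: sumr_ge0 => u; apply: edge_ge0.
rewrite lt0r addr_ge0 ?mulrn_wge0 ?sumr_ge0 // andbT paddr_eq0 ?mulrn_wge0 ?sumr_ge0 //.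
rewrite mulrn_eq0 /=; apply: contra yt0 => /andP[/eqP rows0 /eqP edges0]; apply/eqP.
have [t0S|/y_supp//] := boolP (t0 \in S); apply: rigid t0S => [t tS lt_c | t u tS uS etu].
  move/eqP: (psumr_eq0P row_ge0 rows0 (i := t) isT).
  by rewrite mulf_eq0 pnatr_eq0 subn_eq0 leqNgt lt_c mul_conjC_eq0 => /eqP.
move/eqP: (psumr_eq0P (edge_ge0 t) (psumr_eq0P edges_ge0 edges0 (i := t) isT) (i := u) isT).
by rewrite etu tS uS mul1r mul_conjC_eq0 => /eqP.
Qed.

End RowSumBound.

Section LaplacianMatrix.
Local Open Scope sesquilinear_scope.
Variable v : 'rV[C]_#|T|.
Let y t := v 0 (enum_rank t).

Lemma sum_enum_rank (F : 'I_#|T| -> C) : \sum_i F i = \sum_t F (enum_rank t).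
Proof. exact: reindex (onW_bij _ (enum_rank_bij T)). Qed.

Lemma rowv_sqnormE : (v *m v ^t*) 0 0 = \sum_t y t * (y t)^*.
Proof. by rewrite mxE sum_enum_rank; apply: eq_bigr => t _; rewrite !mxE. Qed.

Lemma laplacian_formE : (v *m laplacian C e *m v ^t*) 0 0 = lap_form y.
Proof.
rewrite mxE; under eq_bigr do rewrite !mxE big_distrl /=.
rewrite exchange_big /lap_form -sumrB sum_enum_rank; apply: eq_bigr => t _.
rewrite sum_enum_rank (bigD1 t) //= [X in _ - X](bigD1 t) //= opprD addrA.
congr (_ + _); first by rewrite !mxE !enum_rankK eqxx /y; ring.
rewrite -sumrN; apply: eq_bigr => u ut; rewrite !mxE !enum_rankK (inj_eq enum_rank_inj).
by rewrite eq_sym (negPf ut) sub0r /y; ring.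
Qed.

End LaplacianMatrix.

Lemma laplacian_adjoint : symmetric e -> ((laplacian C e)^t*)%sesqui = laplacian C e.
Proof.
move=> e_sym; apply/matrixP => i j; rewrite !mxE rmorphB /= conjC_nat e_sym.
by congr (_ - _); rewrite eq_sym; case: eqP => [->|_]; rewrite ?conjC_nat ?rmorph0.
Qed.

End LaplacianForm.

Section SpectralCount.
Variable C : numClosedFieldType.
Local Open Scope ring_scope.
Local Open Scope sesquilinear_scope.

Lemma char_poly_similar (R : comUnitRingType) n (P A : 'M[R]_n) : P \in unitmx ->
  char_poly (invmx P *m A *m P) = char_poly A.
Proof.
move=> Pu; rewrite /char_poly; have -> : char_poly_mx (invmx P *m A *m P) =
    map_mx polyC (invmx P) *m char_poly_mx A *m map_mx polyC P.
  rewrite /char_poly_mx mulmxBr mulmxBl -!map_mxM; congr (_ - _).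
  by rewrite -mulmxA -scalar_mxC mulmxA -map_mxM mulVmx // map_mx1 mul1mx.
rewrite !det_mulmx !det_map_mx mulrC mulrA -rmorphM -det_mulmx.
by rewrite mulmxV // det1 rmorph1 mul1r.
Qed.

Lemma rowsub_unitarymx m m' n (f : 'I_m' -> 'I_m) (M : 'M[C]_(m, n)) :
  injective f -> M \is unitarymx -> rowsub f M \is unitarymx.
Proof.
move=> f_inj /row_unitarymxP M_u; apply/row_unitarymxP => i j.
by rewrite !row_rowsub M_u (inj_eq f_inj).
Qed.

Lemma rank_rowsub_unitarymx n (S : {set 'I_n}) (M : 'M[C]_n) : M \is unitarymx ->
  \rank (rowsub (enum_val : 'I_#|S| -> 'I_n) M) = #|S|.
Proof. by move=> M_u; apply/mxrank_unitary/rowsub_unitarymx/M_u/enum_val_inj. Qed.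

Lemma sub_rowsub_unitarymx n (S : {set 'I_n}) (M : 'M[C]_n) (u : 'rV[C]_n) :
  M \is unitarymx -> (u <= rowsub (enum_val : 'I_#|S| -> 'I_n) M)%MS ->
  forall i, i \notin S -> (u *m M^t*) 0 i = 0.
Proof.
move=> M_u /submxP[a ->] i iS; rewrite rowsubE mulmxA mulmxtVK // mxE big1 // => k _.
by rewrite !mxE; case: eqP => [ki|_]; [move: iS; rewrite -ki enum_valP | rewrite mulr0].
Qed.

Lemma perm_eq_spectral_diag n (A : 'M[C]_n) (s : seq C) : A \is normalmx ->
  char_poly A = \prod_(x <- s) ('X - x%:P) ->
  perm_eq s [seq spectral_diag A 0 i | i <- enum 'I_n].
Proof.
move=> /orthomx_spectralP A_diag A_char; apply: prod_XsubC_eq.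
rewrite -A_char [in LHS]A_diag char_poly_similar ?spectral_unit //.
rewrite char_poly_trig ?diag_mx_is_trig // big_map big_enum /=.
by apply: eq_bigr => i _; rewrite mxE eqxx.
Qed.

Lemma spectral_form_ge n (A : 'M[C]_n) (c : C) (u : 'rV[C]_n) : A \is normalmx ->
  (u <= rowsub (enum_val : 'I_#|[set i | (c <= spectral_diag A 0 i)%R]| -> 'I_n)
                (spectralmx A))%MS ->
  (c * (u *m u^t*) 0 0 <= (u *m A *m u^t*) 0 0)%R.
Proof.
move=> /orthomx_spectralP A_diag u_sub.
set P := spectralmx A in A_diag u_sub; set D := spectral_diag A in A_diag u_sub *.
have P_u : P \is unitarymx by apply: spectral_unitarymx.
have PPt : P *m P^t* = 1%:M by apply/unitarymxP.
have w_supp := sub_rowsub_unitarymx P_u u_sub; set w := u *m P^t* in w_supp.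
have uE : u = w *m P by rewrite mulmxKtV.
have utE : u^t* = P^t* *m w^t* by rewrite uE trmx_mul map_mxM.
have normE : u *m u^t* = w *m w^t* by rewrite utE {1}uE mulmxA -(mulmxA w) PPt mulmx1.
have formE : u *m A *m u^t* = w *m diag_mx D *m w^t*.
  rewrite A_diag invmx_unitary // utE {1}uE !mulmxA -(mulmxA w) PPt mulmx1.
  by rewrite -(mulmxA _ P) PPt mulmx1.
rewrite formE normE; clearbody w.
rewrite mul_mx_diag !mxE mulr_sumr; apply: ler_sum => i _; rewrite !mxE.
have [ciD|/w_supp->] := boolP (i \in [set i | (c <= D 0 i)%R]); last by rewrite !mul0r mulr0.
by rewrite mulrAC mulrC; apply: ler_wpM2l; rewrite ?mul_conjC_ge0 //; rewrite inE in ciD.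
Qed.

Lemma unitarymx1 n : (1%:M : 'M[C]_n) \is unitarymx.
Proof. by apply/unitarymxP; rewrite trmx1 map_mx1 mulmx1. Qed.

Lemma spectrum_count_ge n (A : 'M[C]_n) (s : seq C) (S : {set 'I_n}) (c : C) :
  A \is normalmx -> char_poly A = \prod_(x <- s) ('X - x%:P) ->
  (forall u : 'rV[C]_n, u != 0 -> (forall i, i \notin S -> u 0 i = 0) ->
     (u *m A *m u^t*) 0 0 < c * (u *m u^t*) 0 0)%R ->
  (count (fun x => c <= x)%R s + #|S| <= n)%N.
Proof.
move=> A_normal A_char rayleigh_lt.
set I := [set i | (c <= spectral_diag A 0 i)%R].
have -> : count (fun x => c <= x)%R s = #|I|.
  rewrite (permP (perm_eq_spectral_diag A_normal A_char)) count_map.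
  by rewrite enumT cardsE cardE /enum_mem size_filter.
rewrite -(rank_rowsub_unitarymx I (spectral_unitarymx A)).
rewrite -(rank_rowsub_unitarymx S (unitarymx1 n)) -mxrank_sum_cap.
set K := rowsub _ (spectralmx A); set W := rowsub _ 1%:M.
suff -> : \rank (K :&: W)%MS = 0%N by rewrite addn0 rank_leq_col.
apply/eqP; rewrite mxrank_eq0 -submx0; apply/rV_subP => u.
rewrite sub_capmx submx0 => /andP[uK uW]; apply/negPn/negP => u_nz.
have u_supp i : i \notin S -> u 0 i = 0.
  by move/(sub_rowsub_unitarymx (unitarymx1 n) uW); rewrite trmx1 map_mx1 mulmx1.
by have := spectral_form_ge A_normal uK; rewrite (lt_geF (rayleigh_lt u u_nz u_supp)).
Qed.

End SpectralCount.

Section LaplacianSpectrum.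
Variables (R : realType) (T : finType) (e : rel T).
Hypothesis e_sym : symmetric e.
Local Open Scope ring_scope.
Local Open Scope sesquilinear_scope.

Lemma laplacian_complex : laplacian R[i] e = map_mx (real_complex R) (laplacian R e).
Proof.
apply/matrixP => i j; rewrite !mxE rmorphB /= rmorph_nat.
by case: (i == j); rewrite ?rmorph_nat ?rmorph0.
Qed.

Lemma laplacian_count_ge (s : seq R) (S : {set T}) (c : nat) :
  laplacian_spectrum e s ->
  (forall y : T -> R[i], (forall t, t \notin S -> y t = 0) -> (exists t, y t != 0) ->
     lap_form e y < c%:R * \sum_t y t * (y t)^*) ->
  (count (fun x => c%:R <= x)%R s + #|S| <= #|T|)%N.
Proof.
move=> s_spec rayleigh_lt.
have L_normal : laplacian R[i] e \is normalmx.
  by apply/normalmxP; rewrite laplacian_adjoint.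
have := spectrum_count_ge (s := map (real_complex R) s) (S := enum_rank @: S) (c := c%:R)
  L_normal.
rewrite count_map card_imset; last exact: enum_rank_inj.
rewrite (@eq_count _ _ (fun x => c%:R <= x)); last first.
  by move=> x /=; rewrite -(rmorph_nat (real_complex R)) lecR.
apply.
  by rewrite laplacian_complex -map_char_poly s_spec map_prod_XsubC big_map.
move=> u u_nz u_supp; rewrite laplacian_formE rowv_sqnormE; apply: rayleigh_lt.
  by move=> t tS; apply: u_supp; rewrite mem_imset //; apply: enum_rank_inj.
case/matrix0Pn: u_nz => i0 [i ui]; rewrite (ord1 i0) in ui.
by exists (enum_val i); rewrite enum_valK.
Qed.

End LaplacianSpectrum.

Section Walks.
Variables (T : finType) (e : rel T).

Lemma within_mono x y k k' : within e x y k -> k <= k' -> within e x y k'.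
Proof. by move=> [p [sp pp lp]] kk'; exists p; split => //; apply: leq_trans kk'. Qed.

Lemma within_cat x y z a b : within e x y a -> within e y z b -> within e x z (a + b).
Proof.
case=> p [sp pp lp] [q [sq pq lq]]; exists (p ++ q); split.
- by rewrite size_cat leq_add.
- by rewrite cat_path pp lp pq.
- by rewrite last_cat lp.
Qed.

Lemma within_refl x k : within e x x k.
Proof. by exists [::]. Qed.

Lemma within1 x y : e x y -> within e x y 1.
Proof. by move=> exy; exists [:: y]; rewrite /= exy. Qed.

Lemma within_sym x y k : symmetric e -> within e x y k -> within e y x k.
Proof.
move=> e_sym [p [sp pp lp]]; exists (rev (belast x p)); split.
- by rewrite size_rev size_belast.
- by rewrite -lp rev_path; apply: sub_path pp => u w; rewrite /= e_sym.
- by case: p {sp pp} lp => [|z p] /= <-; rewrite ?rev_cons ?last_rcons.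
Qed.

Lemma diametral_path d : diameter e d -> 0 < d ->
  exists x0 p, [/\ path e x0 p, size p = d & ~ within e x0 (last x0 p) d.-1].
Proof.
case=> all_within [x0 [y0 far]] d_gt0; have [p [sp pp lp]] := all_within x0 y0.
exists x0, p; rewrite lp; split=> //; apply/eqP; rewrite eqn_leq sp leqNgt.
by apply/negP => ltpd; apply: far; exists p; split=> //; rewrite -ltnS prednK.
Qed.

Lemma card_nbr_notin (P : {set T}) t w : w \notin P ->
  #|[set u | e t u] :\: P| + ~~ e t w <= #|~: P|.
Proof.
move=> wP; have sub : [set u | e t u] :\: P \subset ~: P.
  by apply/subsetP => u; rewrite !inE => /andP[].
case: (boolP (e t w)) => etw /=; first by rewrite addn0 subset_leq_card.
rewrite addn1 [#|~: P|](cardsD1 w) inE wP add1n ltnS subset_leq_card //.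
apply/subsetP => u; rewrite !inE => /andP[uP etu]; rewrite uP andbT.
by apply: contraTneq etu => ->.
Qed.

End Walks.

Section Geodesic.
Variables (T : finType) (e : rel T) (x0 : T) (p : seq T) (d : nat).
Hypotheses (e_sym : symmetric e) (e_irr : irreflexive e).
Hypotheses (p_path : path e x0 p) (p_size : size p = d).
Hypothesis p_far : ~ within e x0 (last x0 p) d.-1.

Definition vtx k := nth x0 (x0 :: p) k.
Local Notation v := vtx.

Lemma vtx_last_take k : k <= d -> v k = last x0 (take k p).
Proof.
move=> kd; rewrite (last_nth x0) size_takel ?p_size //.
by rewrite /vtx -[x0 :: take k p]/(take k.+1 (x0 :: p)) nth_take.
Qed.

Lemma vtx_edge k : k < d -> e (v k) (v k.+1).
Proof. by move/(pathP x0): p_path => /(_ k); rewrite p_size. Qed.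

Lemma within_vtx0 k : k <= d -> within e x0 (v k) k.
Proof.
move=> kd; exists (take k p); split; last exact/esym/vtx_last_take.
  by rewrite size_take_min geq_minl.
exact: take_path.
Qed.

Lemma within_vtx_last k : k <= d -> within e (v k) (last x0 p) (d - k).
Proof.
move=> kd; exists (drop k p); rewrite size_drop p_size; split=> //.
  by move: p_path; rewrite -{1}[p](cat_take_drop k) cat_path -vtx_last_take // => /andP[].
by rewrite -{2}[p](cat_take_drop k) last_cat -vtx_last_take.
Qed.

Lemma vtx_dist a b k : b <= d -> within e (v a) (v b) k -> b <= a + k.
Proof.
move=> bd w_ab; rewrite leqNgt; apply/negP => lt_ab; apply: p_far.
have ad : a <= d by lia.
have w_far := within_cat (within_cat (within_vtx0 ad) w_ab) (within_vtx_last bd).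
by apply: within_mono w_far _; lia.
Qed.

Lemma vtx_inj a b : a <= d -> b <= d -> v a = v b -> a = b.
Proof.
move=> ad bd vab; have := vtx_dist bd (a := a) (k := 0).
have := vtx_dist ad (a := b) (k := 0).
by rewrite vab => /(_ (within_refl _ _ _)) ab /(_ (within_refl _ _ _)) ba; lia.
Qed.

Lemma vtx_adj a b : a <= d -> b <= d -> e (v a) (v b) = (a.+1 == b) || (b.+1 == a).
Proof.
move=> ad bd; apply/idP/idP => [eab|].
  have ab : a != b by apply: contraTneq eab => ->; rewrite e_irr.
  have := vtx_dist bd (within1 eab); rewrite e_sym in eab.
  by have := vtx_dist ad (within1 eab); lia.
by case/orP=> /eqP ab; [rewrite -ab | rewrite -ab e_sym]; apply: vtx_edge; lia.
Qed.

Lemma vtx_common_nbr w a b : b <= d -> e w (v a) -> e w (v b) -> b <= a + 2.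
Proof. by move=> bd wa wb; apply: vtx_dist bd _; exists [:: w; v b]; rewrite /= -e_sym wa wb. Qed.

Definition vpath := [set v i | i : 'I_d.+1].

Lemma vpathP t : reflect (exists2 k, k <= d & t = v k) (t \in vpath).
Proof.
apply: (iffP imsetP) => [[k _ ->]|[k kd ->]]; first by exists k; rewrite ?leq_ord.
by exists (Ordinal (kd : k < d.+1)).
Qed.

Lemma vtx_vpath k : k <= d -> v k \in vpath.
Proof. by move=> kd; apply/vpathP; exists k. Qed.

Lemma vtx_ord_inj : injective (fun i : 'I_d.+1 => v i).
Proof. by move=> i j /vtx_inj ij; apply/val_inj/ij; apply: leq_ord. Qed.

Lemma card_vpath : #|vpath| = d.+1.
Proof. by rewrite card_imset ?card_ord //; apply: vtx_ord_inj. Qed.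

Lemma vpath_iso : (forall t, t \in vpath) -> iso_to_path e d.+1.
Proof.
move=> vpathT; have [f vK fK] : bijective (fun i : 'I_d.+1 => v i).
  apply: inj_card_bij vtx_ord_inj _; rewrite card_ord -card_vpath.
  by apply/subset_leq_card/subsetP => t _; apply: vpathT.
exists f; split; first by exists (fun i : 'I_d.+1 => v i).
by move=> x y; rewrite -{1}(fK x) -{1}(fK y) vtx_adj ?leq_ord.
Qed.

(* [first_nbr w] is [d.+1] when [w] has no neighbour on the path, and then
   [cut w] is [d]. *)
Definition first_nbr w := find (fun k => e w (v k)) (iota 0 d.+1).
Definition cut w := minn (first_nbr w).+1 d.

Lemma first_nbr_min w k : k <= d -> e w (v k) -> first_nbr w <= k /\ e w (v (first_nbr w)).
Proof.
move=> kd wk; have has_nbr : has (fun k => e w (v k)) (iota 0 d.+1).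
  by apply/hasP; exists k; rewrite ?mem_iota.
split.
  rewrite leqNgt; apply/negP => lt_k; have := before_find 0 lt_k.
  by rewrite nth_iota ?add0n ?wk // ltnS.
have := nth_find 0 has_nbr; rewrite nth_iota ?add0n //.
by move: has_nbr; rewrite has_find size_iota.
Qed.

Lemma cut_le w : cut w <= d.
Proof. exact: geq_minr. Qed.

Lemma cut_adj w k : 0 < k < d -> e (v k) w -> k != cut w -> e (v k) (v (cut w)).
Proof.
case/andP=> k_gt0 kd kw; rewrite e_sym in kw.
have [ak wa] := first_nbr_min (ltnW kd) kw.
have := vtx_common_nbr (ltnW kd) wa kw.
rewrite vtx_adj ?cut_le // ?(ltnW kd) /cut; lia.
Qed.

Definition vpath_cut w := vpath :\ v (cut w).

Lemma card_vpath_cut w : #|vpath_cut w| = d.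
Proof. by have := cardsD1 (v (cut w)) vpath; rewrite vtx_vpath ?cut_le // card_vpath => -[]. Qed.

Lemma vpath_cutP w t : t \in vpath_cut w -> exists2 k, k <= d & k != cut w /\ t = v k.
Proof.
case/setD1P=> tw /vpathP[k kd tk]; exists k => //; split=> //.
by apply: contraNneq tw => kw; rewrite tk kw.
Qed.

Lemma vtx_vpath_cut w k : k <= d -> k != cut w -> v k \in vpath_cut w.
Proof.
move=> kd kw; rewrite !inE vtx_vpath // andbT.
by apply: contra kw => /eqP/vtx_inj-> //; rewrite cut_le.
Qed.

Lemma card_nbr_vpath k : k <= d -> #|[set u | e (v k) u] :&: vpath| <= (0 < k) + (k < d).
Proof.
move=> kd; have card_ite b (x : T) : #|if b then [set x] else set0| = b.
  by case: b; rewrite ?cards1 ?cards0.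
rewrite -(card_ite (0 < k) (v k.-1)) -(card_ite (k < d) (v k.+1)).
apply: leq_trans (leq_card_setU _ _); apply/subset_leq_card/subsetP => u.
rewrite !inE => /andP[kv /vpathP[b bd ub]]; subst u; move: kv.
rewrite vtx_adj // => /orP[]/eqP eb; [subst b | subst k].
- by rewrite bd !inE eqxx orbT.
- by rewrite /= !inE eqxx.
Qed.

Lemma deg_vpath_cut w k : w \notin vpath -> k <= d -> k != cut w ->
  deg e (v k) + #|[set u in vpath_cut w | e (v k) u]| + ~~ (0 < k < d) <= #|T| - d + 2.
Proof.
(* N(v_k) meets the path only in path-neighbours of v_k; if v_k is interior
   and adjacent to w, one of them is v_(cut w), which is not in [vpath_cut w]. *)
move=> wP kd kw; set N := [set u | e (v k) u].
have degE : deg e (v k) = #|N :&: vpath| + #|N :\: vpath| by rewrite (cardsID vpath).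
have cutE : #|[set u in vpath_cut w | e (v k) u]| + (v (cut w) \in N) = #|N :&: vpath|.
  rewrite [RHS](cardsD1 (v (cut w))) in_setI vtx_vpath ?cut_le // andbT addnC.
  by congr (_ + _); apply: eq_card => u; rewrite !inE -andbA (andbC (e _ _)).
have cut_nbr : (0 < k < d) && e (v k) w -> v (cut w) \in N.
  by case/andP=> kint kw'; rewrite inE cut_adj.
have outside : #|N :\: vpath| + ~~ e (v k) w <= #|~: vpath| := card_nbr_notin e (v k) wP.
have complE : #|~: vpath| + d.+1 = #|T| by rewrite -card_vpath addnC cardsC.
have inside : #|N :&: vpath| <= (0 < k) + (k < d) := card_nbr_vpath kd.
have w_out : 0 < #|~: vpath| by apply/card_gt0P; exists w; rewrite inE.
rewrite degE; move: cut_nbr outside inside cutE complE w_out.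
by case: (0 < k) (k < d) (e (v k) w) (v (cut w) \in N) => [] [] [] [] //=; lia.
Qed.

Lemma vpath_cut_rigid (Z : zmodType) w (y : T -> Z) : w \notin vpath ->
  (forall t, t \in vpath_cut w ->
     deg e t + #|[set u in vpath_cut w | e t u]| < #|T| - d + 2 -> y t = 0%R) ->
  (forall t u, t \in vpath_cut w -> u \in vpath_cut w -> e t u -> (y t + y u = 0)%R) ->
  forall t, t \in vpath_cut w -> y t = 0%R.
Proof.
move=> wP strict_zero balanced.
have end_zero k : k <= d -> k != cut w -> ~~ (0 < k < d) -> y (v k) = 0%R.
  move=> kd kw kend; apply: strict_zero (vtx_vpath_cut kd kw) _.
  by have := deg_vpath_cut wP kd kw; rewrite kend addn1.
have edge_sum k : k < d -> k != cut w -> k.+1 != cut w -> (y (v k) + y (v k.+1) = 0)%R.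
  move=> kd kw k1w; apply: balanced (vtx_edge kd); last exact: vtx_vpath_cut.
  exact: vtx_vpath_cut (ltnW kd) kw.
have cut_d := cut_le w.
have below k : k < cut w -> y (v k) = 0%R.
  elim: k => [|k IH] kw; first by apply: end_zero => //; lia.
  by have := edge_sum k; rewrite IH ?add0r; [apply; lia | lia].
have above i : cut w < d - i -> y (v (d - i)) = 0%R.
  elim: i => [|i IH] iw; first by rewrite subn0 in iw *; apply: end_zero => //; lia.
  have di : (d - i.+1).+1 = d - i by lia.
  by have := edge_sum (d - i.+1); rewrite di IH ?addr0; [apply; lia | lia].
move=> t /vpath_cutP[k kd [kw ->]].
case: (ltngtP k (cut w)) => [|wk|]; [exact: below | | by move/eqP: kw].
by rewrite -(subKn kd); apply: above; rewrite subKn.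
Qed.

Lemma vpath_cut_rayleigh (C : numClosedFieldType) w : w \notin vpath ->
  forall y : T -> C, (forall t, t \notin vpath_cut w -> y t = 0%R) -> (exists t, y t != 0%R) ->
  (lap_form e y < (#|T| - d + 2)%:R * \sum_t y t * (y t)^*)%R.
Proof.
move=> wP y y_supp y_nz; apply: (lap_form_lt e_sym y_supp _ _ y_nz).
  move=> t /vpath_cutP[k kd [kw ->]].
  by apply: leq_trans (deg_vpath_cut wP kd kw); apply: leq_addr.
exact: vpath_cut_rigid.
Qed.

End Geodesic.

Theorem theorem3p1 (R : realType) (T : finType) (e : rel T) (d : nat)
  (e_sym : symmetric e) (e_irr : irreflexive e)
  (Gconn : connected_graph e) (Gdiam : diameter e d) (d_ge2 : (2 <= d)%N)
  (not_path : ~ iso_to_path e d.+1)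
  (s : seq R) (Hs : laplacian_spectrum e s) :
  (mG_closed s (#|T|%:R - d%:R + 2) #|T|%:R <= #|T| - d)%N.
Proof.
have [x0 [p [p_path p_size p_far]]] := diametral_path Gdiam (ltnW d_ge2).
have [w wP] : exists w, w \notin vpath x0 p d.
  apply/existsP; rewrite -negb_forall; apply: contra_notN not_path => /forallP.
  exact: vpath_iso e_sym e_irr p_path p_size p_far.
have dT : (d < #|T|)%N by rewrite -(card_vpath p_path p_size p_far) max_card.
have := laplacian_count_ge e_sym Hs (vpath_cut_rayleigh e_sym e_irr p_path p_size p_far wP).
rewrite (card_vpath_cut p_path p_size p_far) => count_le.
have range_ge (x : R) : (#|T|%:R - d%:R + 2 <= x <= #|T|%:R -> (#|T| - d + 2)%:R <= x)%R.
  by case/andP; rewrite natrD natrB ?(ltnW dT).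
apply: leq_trans (sub_count range_ge s) _.
by rewrite leq_subRL ?(ltnW dT) // addnC.
Qed.
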